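(* Let $\Sigma$ be a graded alphabet and $t\in T_\Sigma$. Then the relation $\sim_\mathrm{h}$ on the state set $\mathrm{SubTree}(t^\sharp)$ of the subtree automaton $A_t$, defined by $r_1\sim_\mathrm{h}r_2\iff\mathrm{h}(r_1)=\mathrm{h}(r_2)$, is down compatible with $A_t$.
   Context: A graded alphabet is a finite set $\Sigma=\bigcup_{k\in\mathbb{N}}\Sigma_k$; $T_\Sigma$ is the set of trees $f(t_1,\ldots,t_k)$ with $f\in\Sigma_k$. A RWTA is $A=(\Sigma,Q,\nu,\delta)$ with $Q$ finite, $\nu:Q\to\mathbb{N}$, $\delta\subseteq\bigcup_k Q\times\Sigma_k\times Q^k$; $\delta(f,q_1,\ldots,q_k)=\{q\mid(q,f,q_1,\ldots,q_k)\in\delta\}$, extended to subsets by union over tuples; $\Delta(f(t_1,\ldots,t_k))=\delta(f,\Delta(t_1),\ldots,\Delta(t_k))$. The down language of a state $q$ is $L_q(A)=\{s\in T_\Sigma\mid q\in\Delta(s)\}$; an equivalence relation $\sim$ on $Q$ is down compatible with $A$ if $q_1\sim q_2$ implies $L_{q_1}(A)=L_{q_2}(A)$. For $t=f(t_1,\ldots,t_k)$, $\mathrm{SubTree}(t)=\{t\}\cup\bigcup_j\mathrm{SubTree}(t_j)$. The tree $t^\sharp$ is obtained from $t$ by indexing each symbol occurrence with its position in a preorder traversal (indexed symbols are distinct and keep their arity); $\Sigma_{t^\sharp}$ is the set of indexed symbols of $t^\sharp$; $\mathrm{h}$ erases indices. The subtree automaton of $t$ is $A_t=(\Sigma,Q,\nu,\delta)$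 with $Q=\mathrm{SubTree}(t^\sharp)$, $\nu\equiv1$, and for $f\in\Sigma_{t^\sharp}$ of arity $k$ and $t_1,\ldots,t_{k+1}\in Q$: $t_{k+1}\in\delta(\mathrm{h}(f),t_1,\ldots,t_k)$ iff $t_{k+1}=f(t_1,\ldots,t_k)$. *)

From mathcomp Require Import all_boot.
From Stdlib Require Import List.
Import ListNotations.

Set Implicit Arguments.
Unset Strict Implicit.

Inductive tree (A : Type) : Type :=
  | Node : A -> list (tree A) -> tree A.
Arguments Node {A} _ _.

Section Trees.
Variable A : Type.

Fixpoint wf (arity : A -> nat) (t : tree A) : Prop :=
  match t with
  | Node f ts =>
      length ts = arity f /\
      (fix wfl (l : list (tree A)) : Prop :=
         match l with [] => True | u :: r => wf arity u /\ wfl r end) ts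
  end.

Fixpoint is_subtree (u t : tree A) : Prop :=
  match t with
  | Node f ts =>
      u = t \/
      (fix subl (l : list (tree A)) : Prop :=
         match l with [] => False | v :: r => is_subtree u v \/ subl r end) ts
  end.

Fixpoint labels (t : tree A) : list A :=
  match t with
  | Node f ts => f :: flat_map labels ts
  end.

End Trees.

Fixpoint tmap (A B : Type) (g : A -> B) (t : tree A) : tree B :=
  match t with Node f ts => Node (g f) (map (tmap g) ts) end.

(* t^# : index each symbol occurrence by its position in a preorder traversal
   (root of the whole tree gets index 0, numbering continues in preorder).
   sharp_aux t n returns the indexed tree and the next free index. *)
Fixpoint sharp_aux (A : Type) (t : tree A) (n : nat) : tree (A * nat) * nat :=
  match t with
  | Node f ts =>
      let '(cs, m) :=
        (fix go (l : list (tree A)) (k : nat) : list (tree (A * nat)) * nat :=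
           match l with
           | [] => ([], k)
           | u :: r =>
               let '(c, k1) := sharp_aux u k in
               let '(cs, k2) := go r k1 in (c :: cs, k2)
           end) ts (S n)
      in (Node (f, n) cs, m)
  end.

Definition sharp (A : Type) (t : tree A) : tree (A * nat) := fst (sharp_aux t 0).

Definition h_sym (A : Type) (f : A * nat) : A := fst f.
Definition h (A : Type) (t : tree (A * nat)) : tree A := tmap (@h_sym A) t.

(* A RWTA A = (Σ, Q, ν, δ) over a graded alphabet (Sigma, arity):
   states live in a carrier type, Q is the predicate [is_state];
   [delta q f qs] means (q, f, q1, ..., qk) ∈ δ where qs = [q1; ...; qk]. *)
Record rwta (Sigma : Type) (arity : Sigma -> nat) := RWTA {
  state : Type;
  is_state : state -> Prop;
  state_finite : exists l : list state, forall q, is_state q -> In q l;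
  nu : state -> nat;
  delta : state -> Sigma -> list state -> Prop
}.
Arguments state {Sigma arity} _.
Arguments is_state {Sigma arity} _ _.
Arguments nu {Sigma arity} _ _.
Arguments delta {Sigma arity} _ _ _ _.

Section Run.
Variables (Sigma : Type) (arity : Sigma -> nat) (Aut : rwta arity).

Definition delta_set (f : Sigma) (Ss : list (state Aut -> Prop)) (q : state Aut) : Prop :=
  exists qs : list (state Aut),
    Forall2 (fun (S : state Aut -> Prop) q' => S q') Ss qs /\ delta Aut q f qs.

Fixpoint Delta (s : tree Sigma) : state Aut -> Prop :=
  match s with
  | Node f ts => delta_set f (map Delta ts)
  end.

Definition down_lang (q : state Aut) (s : tree Sigma) : Prop :=
  wf arity s /\ Delta s q.

Definition down_compatible (R : state Aut -> state Aut -> Prop) : Prop :=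
  (forall q, is_state Aut q -> R q q) /\
  (forall q1 q2, is_state Aut q1 -> is_state Aut q2 -> R q1 q2 -> R q2 q1) /\
  (forall q1 q2 q3, is_state Aut q1 -> is_state Aut q2 -> is_state Aut q3 ->
      R q1 q2 -> R q2 q3 -> R q1 q3) /\
  (forall q1 q2, is_state Aut q1 -> is_state Aut q2 -> R q1 q2 ->
      forall s, down_lang q1 s <-> down_lang q2 s).
End Run.
Arguments down_compatible {Sigma arity} Aut R.
Arguments down_lang {Sigma arity} Aut q s.
Arguments Delta {Sigma arity} Aut s _.

(* The subtree automaton A_t: Q = SubTree(t^#), ν ≡ 1, and for f ∈ Σ_{t^#} of arity k
   (arity of an indexed symbol = arity of the symbol) and t1..t(k+1) ∈ Q:
   t(k+1) ∈ δ(h(f), t1, ..., tk)  iff  t(k+1) = f(t1, ..., tk). *)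
Definition subtree_delta (Sigma : Type) (arity : Sigma -> nat) (t : tree Sigma)
    (q : tree (Sigma * nat)) (g : Sigma) (qs : list (tree (Sigma * nat))) : Prop :=
  exists fi : Sigma * nat,
    In fi (labels (sharp t)) /\ h_sym fi = g /\ length qs = arity (h_sym fi) /\
    (forall qi, In qi qs -> is_subtree qi (sharp t)) /\
    is_subtree q (sharp t) /\
    q = Node fi qs.

Lemma subtree_states_finite (A : Type) (t : tree A) :
  exists l : list (tree A), forall q, is_subtree q t -> In q l.
Proof.
  revert t. fix IH 1. intros [f ts].
  assert (H : exists l, forall q,
    (fix subl (l : list (tree A)) : Prop :=
       match l with [] => False | v :: r => is_subtree q v \/ subl r end) ts -> In q l).
  { induction ts as [|u r IHr].
    - exists []. intros q [].
    - destruct (IH u) as [l1 H1]. destruct IHr as [l2 H2].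
      exists (l1 ++ l2). intros q [Hq|Hq]; apply in_or_app; [left|right]; auto. }
  destruct H as [l Hl]. exists (Node f ts :: l).
  intros q [->|Hq]; [left; reflexivity | right; auto].
Qed.

Definition subtree_automaton (Sigma : Type) (arity : Sigma -> nat) (t : tree Sigma)
  : rwta arity :=
  @RWTA Sigma arity (tree (Sigma * nat))
    (fun q => is_subtree q (sharp t))
    (subtree_states_finite (sharp t))
    (fun _ => 1)
    (subtree_delta arity t).

Example sharp_ex : sharp (Node 5 [Node 6 [Node 7 []]; Node 8 []]) =
  Node (5,0) [Node (6,1) [Node (7,2) []]; Node (8,3) []].
Proof. reflexivity. Qed.

(* In the subtree automaton every state q is reached from exactly one input,
   namely its unindexed form h(q): by induction on the input, a run assigning
   q to s must rebuild q symbol by symbol, so h(q) = s; conversely the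
   children of q are states again, so h(q) reaches q whenever it is
   well-formed.  Hence L_q(A_t) = {h(q)} (or empty), which depends on q only
   through h(q). *)
From mathcomp Require Import all_boot.
From Stdlib Require Import List.
Import ListNotations.

Section Trees.
Variable A : Type.

Fixpoint tree_ind_in (P : tree A -> Prop)
  (IH : forall f ts, (forall u, In u ts -> P u) -> P (Node f ts)) (t : tree A) : P t :=
  match t with
  | Node f ts => IH f ts
      ((fix go (l : list (tree A)) : forall u, In u l -> P u :=
         match l with
         | [] => fun u (Hin : In u []) => False_ind _ Hin
         | v :: r => fun u Hin =>
             match Hin with
             | or_introl e => eq_ind v P (tree_ind_in P IH v) u e
             | or_intror Hr => go r u Hr
             end
         end) ts)
  end.

Lemma is_subtree_Node (u : tree A) f ts :
  is_subtree u (Node f ts) <-> u = Node f ts \/ exists v, In v ts /\ is_subtree u v.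
Proof.
  simpl. split; intros [H|H]; auto; right.
  - induction ts as [|v r IH]; [contradiction|].
    destruct H as [H|H]; [exists v; simpl; auto|].
    destruct (IH H) as [w [Hw Huw]]. exists w; simpl; auto.
  - destruct H as [v [Hin Huv]]. induction ts as [|w r IH]; [contradiction|].
    destruct Hin as [->|Hin]; [left; auto | right; apply IH; auto].
Qed.

Lemma is_subtree_refl (u : tree A) : is_subtree u u.
Proof. destruct u as [f ts]; apply is_subtree_Node; auto. Qed.

Lemma is_subtree_trans (a b c : tree A) :
  is_subtree a b -> is_subtree b c -> is_subtree a c.
Proof.
  revert a b. induction c as [f ts IH] using tree_ind_in. intros a b Hab Hbc.
  apply is_subtree_Node in Hbc as [->|[v [Hv Hbv]]]; auto.
  apply is_subtree_Node. right. exists v; split; eauto.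
Qed.

Lemma is_subtree_child (c : tree A) f qs q :
  is_subtree (Node f qs) c -> In q qs -> is_subtree q c.
Proof.
  intros Hc Hq. apply (@is_subtree_trans q (Node f qs) c); auto.
  apply is_subtree_Node; right; exists q; split; auto; apply is_subtree_refl.
Qed.

Lemma is_subtree_labels (c : tree A) f qs :
  is_subtree (Node f qs) c -> In f (labels c).
Proof.
  induction c as [g ts IH] using tree_ind_in. intros H.
  apply is_subtree_Node in H as [H|[v [Hv H]]].
  - inversion H; subst; simpl; auto.
  - simpl; right. apply in_flat_map. exists v; split; eauto.
Qed.

Lemma wf_Node (arity : A -> nat) f ts :
  wf arity (Node f ts) <-> length ts = arity f /\ (forall u, In u ts -> wf arity u).
Proof.
  simpl. split; intros [Hlen Hts]; split; auto; clear Hlen.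
  - induction ts as [|v r IH]; [intros u []|].
    destruct Hts as [Hv Hr]. intros u [<-|Hu]; auto.
  - induction ts as [|v r IH]; simpl; auto.
    split; [apply Hts; left; auto | apply IH; intros; apply Hts; right; auto].
Qed.
End Trees.

Section SubtreeAutomaton.
Variables (Sigma : finType) (arity : Sigma -> nat) (t : tree Sigma).
Let At := subtree_automaton arity t.

Lemma Delta_subtree_automaton_sound (s : tree Sigma) (q : tree (Sigma * nat)) :
  Delta At s q -> is_subtree q (sharp t) /\ h q = s.
Proof.
  revert q. induction s as [g ss IH] using tree_ind_in. intros q Hq.
  destruct Hq as [qs [Hrun [fi [_ [<- [_ [_ [Hq ->]]]]]]]].
  split; auto. unfold h; simpl. f_equal.
  clear Hq. revert qs Hrun. induction ss as [|u r IHr]; intros qs Hrun;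
    inversion Hrun as [|? q' ? qs' Hu Hr]; subst; simpl; auto.
  f_equal.
  - exact (proj2 (IH u (or_introl (Logic.eq_refl u)) q' Hu)).
  - apply IHr; auto. intros v Hv; apply IH; simpl; auto.
Qed.

Lemma Delta_subtree_automaton_complete (q : tree (Sigma * nat)) :
  is_subtree q (sharp t) -> wf arity (h q) -> Delta At (h q) q.
Proof.
  induction q as [fi qs IH] using tree_ind_in. intros Hq Hwf.
  unfold h in *; simpl in *. apply wf_Node in Hwf as [Hlen Hwf].
  exists qs. split.
  - assert (Hchildren : forall qi, In qi qs -> Delta At (tmap (@h_sym Sigma) qi) qi).
    { intros qi Hqi. apply IH; auto.
      - eapply is_subtree_child; eauto.
      - apply Hwf, in_map; auto. }
    clear -Hchildren. induction qs as [|v r IHr]; simpl; constructor.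
    + apply Hchildren; simpl; auto.
    + apply IHr. intros qi Hqi; apply Hchildren; simpl; auto.
  - exists fi. rewrite length_map in Hlen. repeat split; auto.
    + eapply is_subtree_labels; eauto.
    + intros qi Hqi. eapply is_subtree_child; eauto.
Qed.

Lemma down_lang_subtree_automaton (q : tree (Sigma * nat)) (s : tree Sigma) :
  is_subtree q (sharp t) -> down_lang At q s <-> wf arity s /\ h q = s.
Proof.
  intros Hq. unfold down_lang. split.
  - intros [Hwf Hrun]. split; auto. exact (proj2 (Delta_subtree_automaton_sound _ _ Hrun)).
  - intros [Hwf <-]. split; auto. apply Delta_subtree_automaton_complete; auto.
Qed.
End SubtreeAutomaton.

Arguments down_lang_subtree_automaton {Sigma arity t q} s.

Theorem lemma8 (Sigma : finType) (arity : Sigma -> nat) (t : tree Sigma)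
  (Ht : wf arity t) :
  down_compatible (subtree_automaton arity t)
    (fun r1 r2 : tree (Sigma * nat) => h r1 = h r2).
Proof.
  split; [|split; [|split]]; simpl.
  - auto.
  - auto.
  - intros; congruence.
  - intros q1 q2 Hq1 Hq2 E s.
    rewrite (down_lang_subtree_automaton s Hq1) (down_lang_subtree_automaton s Hq2) E.
    reflexivity.
Qed.
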